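(* Let $x_k\in\mathbb{R}^n_{\ge0}$ satisfy $Ax_k\le(1+\epsilon)\mathbf 1$, let $t\in\{0,\dots,w-1\}$, and let $B_t=\{i:\xi^{(t)}_k[i]\ne 0\}$. Then for every $\tau\in[0,1]$ and $x=\tau x_k+(1-\tau)x^{(t)}_{k+1}$, and every $i\in B_t$, the value $\nabla_i f_\mu(x)$ lies between $\frac12\nabla_i f_\mu(x_k)$ and $\frac32\nabla_i f_\mu(x_k)$ (in particular it has the same sign as $\nabla_i f_\mu(x_k)$).
   Context: Standing setup: $A\in\mathbb{R}^{m\times n}_{\ge 0}$, $\epsilon\in(0,1/2]$, $\log$ is the natural logarithm unless written $\log_2$. $\mu=\frac{\epsilon}{4\log(nm/\epsilon)}$, $p_j(x)=\exp\big(\frac{1}{\mu}((Ax)_j-1)\big)$, $f_\mu(x)=-\mathbf 1^Tx+\mu\sum_{j=1}^m p_j(x)$, with gradient $\nabla_i f_\mu(x)=-1+\sum_j A_{ji}p_j(x)\ge -1$. Set $\alpha=\mu/20$ and $w=\lceil\log_2(1/\epsilon)\rceil$. Given $x_k\ge 0$, write $g_i=\nabla_i f_\mu(x_k)$ and define $\xi_k[i]=0$ if $|g_i|\le\epsilon$, $\xi_k[i]=g_i$ if $\epsilon<|g_i|\le1$, $\xi_k[i]=1$ if $g_i>1$; for $t\in\{0,\dots,w-1\}$, $\xi^{(t)}_k[i]=\xi_k[i]$ if $\epsilon2^t<|\xi_k[i]|\le\epsilon2^{t+1}$ and $0$ otherwise; and $x^{(t)}_{k+1}[i]=x_k[i]\exp(-\alpha\xi^{(t)}_k[i])$.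 *)

From Stdlib Require Import Reals Lra Lia ZArith.
Open Scope R_scope.

Fixpoint fsum (n : nat) (f : nat -> R) : R :=
  match n with O => 0 | S k => fsum k f + f k end.

(* A is an m x n matrix given by entries A j i (row j < m, column i < n);
   vectors x : nat -> R, only indices < n matter. *)

Definition Ax (n : nat) (A : nat -> nat -> R) (x : nat -> R) (j : nat) : R :=
  fsum n (fun i => A j i * x i).

Definition mu (n m : nat) (eps : R) : R :=
  eps / (4 * ln (INR n * INR m / eps)).

Definition pj (n m : nat) (eps : R) (A : nat -> nat -> R) (x : nat -> R) (j : nat) : R :=
  exp (/ mu n m eps * (Ax n A x j - 1)).

Definition grad (n m : nat) (eps : R) (A : nat -> nat -> R) (x : nat -> R) (i : nat) : R :=
  -1 + fsum m (fun j => A j i * pj n m eps A x j).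

Definition alpha (n m : nat) (eps : R) : R := mu n m eps / 20.

(* w = ceil(log2 (1/eps)), ceil y = - floor (- y), floor = Int_part *)
Definition wnum (eps : R) : nat :=
  Z.to_nat (- Int_part (- (ln (/ eps) / ln 2))).

Definition xi (n m : nat) (eps : R) (A : nat -> nat -> R) (xk : nat -> R) (i : nat) : R :=
  let g := grad n m eps A xk i in
  if Rle_dec (Rabs g) eps then 0
  else if Rle_dec (Rabs g) 1 then g
  else 1.   (* |g| > 1 forces g > 1 since g >= -1 *)

Definition xit (n m : nat) (eps : R) (A : nat -> nat -> R) (xk : nat -> R) (t i : nat) : R :=
  let v := xi n m eps A xk i in
  if Rlt_dec (eps * 2 ^ t) (Rabs v) then
    (if Rle_dec (Rabs v) (eps * 2 ^ (S t)) then v else 0)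
  else 0.

Definition xnext (n m : nat) (eps : R) (A : nat -> nat -> R) (xk : nat -> R) (t i : nat) : R :=
  xk i * exp (- alpha n m eps * xit n m eps A xk t i).

(** The step [x^(t)_(k+1)] rescales each coordinate of [x_k] by [exp(-alpha xi)] with
    [|xi| <= c := eps 2^(t+1)], so every point [x] of the segment satisfies
    [|x - x_k| <= (e^(alpha c) - 1) x_k] coordinatewise.  As [A >= 0] and [A x_k <= 1 + eps],
    this perturbs each [(Ax)_j] by at most [mu c / 13], hence each [p_j] by a relative
    error [e^(c/13) - 1 <= c/11], and the gradient [g = -1 + S], [S = sum_j A_ji p_j(x_k)],
    by at most [S c / 11].  On [B_t] one has [c/2 < |g|] and [c < 2], which makes
    [S c / 11 <= |g| / 2]. *)
From Stdlib Require Import Reals Lra Lia.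
Open Scope R_scope.

Lemma fsum_nonneg n f : (forall k, (k < n)%nat -> 0 <= f k) -> 0 <= fsum n f.
Proof.
  induction n as [|n IH]; simpl; intros H; [lra|].
  assert (0 <= fsum n f) by (apply IH; intros; apply H; lia).
  assert (0 <= f n) by (apply H; lia).
  lra.
Qed.

Lemma fsum_scal n c f : fsum n (fun k => c * f k) = c * fsum n f.
Proof. induction n as [|n IH]; simpl; [ring|]. rewrite IH; ring. Qed.

Lemma Rabs_fsum_sub_le n f g h :
  (forall k, (k < n)%nat -> Rabs (f k - g k) <= h k) ->
  Rabs (fsum n f - fsum n g) <= fsum n h.
Proof.
  induction n as [|n IH]; simpl; intros H.
  - rewrite Rminus_0_r, Rabs_R0; lra.
  - replace (fsum n f + f n - (fsum n g + g n))
      with ((fsum n f - fsum n g) + (f n - g n)) by ring.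
    eapply Rle_trans; [apply Rabs_triang|].
    assert (Rabs (fsum n f - fsum n g) <= fsum n h) by (apply IH; intros; apply H; lia).
    assert (Rabs (f n - g n) <= h n) by (apply H; lia).
    lra.
Qed.

Lemma fsum_rel_err n a x y K :
  (forall k, (k < n)%nat -> 0 <= a k) ->
  (forall k, (k < n)%nat -> Rabs (y k - x k) <= K * x k) ->
  Rabs (fsum n (fun k => a k * y k) - fsum n (fun k => a k * x k))
    <= K * fsum n (fun k => a k * x k).
Proof.
  intros Ha Hxy. rewrite <- fsum_scal. apply Rabs_fsum_sub_le. intros k Hk.
  replace (a k * y k - a k * x k) with (a k * (y k - x k)) by ring.
  rewrite Rabs_mult, (Rabs_pos_eq (a k)) by auto.
  replace (K * (a k * x k)) with (a k * (K * x k)) by ring.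
  apply Rmult_le_compat_l; auto.
Qed.

Lemma exp_le x y : x <= y -> exp x <= exp y.
Proof. intros [H|H]; [left; now apply exp_increasing | subst; lra]. Qed.

Lemma Rabs_exp_sub1 z : Rabs (exp z - 1) <= exp (Rabs z) - 1.
Proof.
  pose proof (exp_ineq1_le z). pose proof (exp_ineq1_le (- z)).
  destruct (Rle_dec 0 z).
  - rewrite (Rabs_pos_eq z), Rabs_pos_eq; lra.
  - rewrite (Rabs_left z) by lra. apply Rabs_le.
    assert (exp z <= exp (- z)) by (apply exp_le; lra). lra.
Qed.

(* From [e^(-y) >= 1 - y]. *)
Lemma exp_sub1_le y : y <= 1 -> (1 - y) * (exp y - 1) <= y.
Proof.
  intros Hy. pose proof (exp_ineq1_le (- y)) as H. rewrite exp_Ropp in H.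
  pose proof (exp_pos y).
  assert ((1 - y) * exp y <= / exp y * exp y) by (apply Rmult_le_compat_r; lra).
  rewrite Rinv_l in * by lra. lra.
Qed.

Lemma Rabs_exp_plus_sub a d b :
  Rabs d <= b -> Rabs (exp (a + d) - exp a) <= exp a * (exp b - 1).
Proof.
  intros Hd. rewrite exp_plus.
  replace (exp a * exp d - exp a) with (exp a * (exp d - 1)) by ring.
  pose proof (exp_pos a).
  rewrite Rabs_mult, (Rabs_pos_eq (exp a)) by lra.
  apply Rmult_le_compat_l; [lra|].
  eapply Rle_trans; [apply Rabs_exp_sub1|]. apply Rplus_le_compat_r, exp_le, Hd.
Qed.

Lemma Rabs_convex_exp_step u tau z b :
  0 <= u -> 0 <= tau <= 1 -> Rabs z <= b ->
  Rabs (tau * u + (1 - tau) * (u * exp z) - u) <= (exp b - 1) * u.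
Proof.
  intros Hu Htau Hz.
  replace (tau * u + (1 - tau) * (u * exp z) - u) with ((1 - tau) * u * (exp z - 1)) by ring.
  rewrite !Rabs_mult, (Rabs_pos_eq (1 - tau)), (Rabs_pos_eq u) by lra.
  assert (Hb : Rabs (exp z - 1) <= exp b - 1).
  { eapply Rle_trans; [apply Rabs_exp_sub1|]. apply Rplus_le_compat_r, exp_le, Hz. }
  pose proof (Rabs_pos (exp z - 1)).
  assert ((1 - tau) * u <= u) by nra.
  nra.
Qed.

Lemma within_half_band g G :
  Rabs (G - g) <= Rabs g / 2 ->
  (1 / 2 * g <= G <= 3 / 2 * g) \/ (3 / 2 * g <= G <= 1 / 2 * g).
Proof.
  intros H. pose proof (Rle_abs (G - g)). pose proof (Rle_abs (- (G - g))).
  rewrite Rabs_Ropp in *.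
  destruct (Rle_dec 0 g).
  - rewrite (Rabs_pos_eq g) in H by lra. left; lra.
  - rewrite (Rabs_left g) in H by lra. right; lra.
Qed.

Lemma mu_bounds n m eps :
  (0 < n)%nat -> (0 < m)%nat -> 0 < eps <= 1 / 2 ->
  0 < mu n m eps <= eps / 2.
Proof.
  intros Hn Hm Heps.
  assert (1 <= INR n) by (apply (le_INR 1); lia).
  assert (1 <= INR m) by (apply (le_INR 1); lia).
  assert (2 <= / eps) by (replace 2 with (/ (1 / 2)) by field; apply Rinv_le_contravar; lra).
  assert (1 <= INR n * INR m) by nra.
  assert (Hnm : 2 <= INR n * INR m / eps) by (unfold Rdiv; nra).
  assert (ln 2 <= ln (INR n * INR m / eps)).
  { destruct (Rle_lt_or_eq_dec _ _ Hnm) as [Hlt| <-]; [|lra].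
    apply Rlt_le, ln_increasing; lra. }
  pose proof ln_lt_2.
  assert (mu n m eps * (4 * ln (INR n * INR m / eps)) = eps) by (unfold mu; field; lra).
  split; [unfold mu; apply Rdiv_lt_0_compat|]; nra.
Qed.

Lemma Rabs_xit_le n m eps A xk t l :
  0 < eps -> Rabs (xit n m eps A xk t l) <= eps * 2 ^ S t.
Proof.
  intros He. assert (0 < eps * 2 ^ S t) by (apply Rmult_lt_0_compat; [lra | apply pow_lt; lra]).
  unfold xit. destruct Rlt_dec; [destruct Rle_dec|]; rewrite ?Rabs_R0; lra.
Qed.

(* [c/2 < |xi_k[i]| <= min(1, |g_i|)] for [c = eps 2^(t+1)]. *)
Lemma xit_nonzero_level n m eps A xk t i :
  xit n m eps A xk t i <> 0 ->
  eps * 2 ^ S t / 2 < Rabs (grad n m eps A xk i) /\ eps * 2 ^ S t < 2.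
Proof.
  assert (Hxi : Rabs (xi n m eps A xk i) <= 1
                /\ Rabs (xi n m eps A xk i) <= Rabs (grad n m eps A xk i)).
  { unfold xi. destruct Rle_dec; [|destruct Rle_dec]; rewrite ?Rabs_R0, ?Rabs_R1;
      pose proof (Rabs_pos (grad n m eps A xk i)); lra. }
  unfold xit. destruct Rlt_dec as [Hlo|]; [|tauto].
  destruct Rle_dec; [|tauto]. intros _. simpl in *. lra.
Qed.

(* [alpha c <= 1/40] gives [e^(alpha c) - 1 <= (40/39) alpha c], and [(40/39) (3/2) / 20 = 1/13]. *)
Lemma exp_step_err_le eps mu c :
  0 < mu <= eps / 2 -> eps <= 1 / 2 -> 0 <= c < 2 ->
  (exp (mu / 20 * c) - 1) * (1 + eps) <= mu * (c / 13).
Proof.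
  intros Hmu Heps Hc.
  set (y := mu / 20 * c).
  assert (Hy : 0 <= y <= 1 / 40) by (unfold y; split; nra).
  pose proof (exp_sub1_le y ltac:(lra)). pose proof (exp_ineq1_le y).
  assert (exp y - 1 <= 40 / 39 * y) by nra.
  unfold y in *. nra.
Qed.

Lemma exp_c13_le c : 0 <= c <= 2 -> exp (c / 13) - 1 <= c / 11.
Proof. intros Hc. pose proof (exp_sub1_le (c / 13)). pose proof (exp_ineq1_le (c / 13)). nra. Qed.

Lemma pj_rel_err n m eps A x y j D :
  0 < mu n m eps ->
  Rabs (Ax n A y j - Ax n A x j) <= mu n m eps * D ->
  Rabs (pj n m eps A y j - pj n m eps A x j) <= (exp D - 1) * pj n m eps A x j.
Proof.
  intros Hmu HAx. unfold pj. rewrite (Rmult_comm (exp D - 1)).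
  replace (/ mu n m eps * (Ax n A y j - 1))
    with (/ mu n m eps * (Ax n A x j - 1) + / mu n m eps * (Ax n A y j - Ax n A x j))
    by ring.
  apply Rabs_exp_plus_sub.
  rewrite Rabs_mult, Rabs_pos_eq by (left; now apply Rinv_0_lt_compat).
  apply (Rmult_le_reg_l (mu n m eps)); [lra|].
  rewrite <- Rmult_assoc, Rinv_r, Rmult_1_l by lra. exact HAx.
Qed.

Lemma grad_close_band g G c :
  -1 <= g -> 0 <= c < 2 -> c / 2 < Rabs g -> Rabs (G - g) <= c / 11 * (g + 1) ->
  (1 / 2 * g <= G <= 3 / 2 * g) \/ (3 / 2 * g <= G <= 1 / 2 * g).
Proof.
  intros Hg Hc Hcg HG. apply within_half_band.
  eapply Rle_trans; [exact HG|].
  destruct (Rle_dec g 1).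
  - assert (g + 1 <= 2) by lra. nra.
  - rewrite Rabs_pos_eq in * by lra. nra.
Qed.

Theorem lemma3p3 (n m : nat) (A : nat -> nat -> R) (eps : R) (xk : nat -> R)
  (t : nat) (tau : R) (i : nat) :
  (0 < n)%nat -> (0 < m)%nat ->
  (forall j l, (j < m)%nat -> (l < n)%nat -> 0 <= A j l) ->
  0 < eps -> eps <= 1 / 2 ->
  (forall l, (l < n)%nat -> 0 <= xk l) ->
  (forall j, (j < m)%nat -> Ax n A xk j <= 1 + eps) ->
  (t < wnum eps)%nat ->
  0 <= tau <= 1 ->
  (i < n)%nat ->
  xit n m eps A xk t i <> 0 ->
  let x := fun l => tau * xk l + (1 - tau) * xnext n m eps A xk t l in
  let g := grad n m eps A xk i in
  (1 / 2 * g <= grad n m eps A x i <= 3 / 2 * g) \/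
  (3 / 2 * g <= grad n m eps A x i <= 1 / 2 * g).
Proof.
  intros Hn Hm HA He He2 Hxk HAxk _ Htau Hi Hxit x g.
  pose proof (mu_bounds n m eps Hn Hm ltac:(lra)) as Hmu.
  destruct (xit_nonzero_level n m eps A xk t i Hxit) as [Hcg Hc].
  set (c := eps * 2 ^ S t) in *.
  assert (Hc0 : 0 <= c) by (apply Rmult_le_pos; [lra | apply pow_le; lra]).
  assert (Hx : forall l, (l < n)%nat -> Rabs (x l - xk l) <= (exp (alpha n m eps * c) - 1) * xk l).
  { intros l Hl. apply Rabs_convex_exp_step; auto.
    unfold alpha. rewrite Rabs_mult, Rabs_Ropp, (Rabs_pos_eq (mu n m eps / 20)) by lra.
    apply Rmult_le_compat_l; [lra|]. now apply Rabs_xit_le. }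
  assert (HAx : forall j, (j < m)%nat -> Rabs (Ax n A x j - Ax n A xk j) <= mu n m eps * (c / 13)).
  { intros j Hj. eapply Rle_trans; [apply fsum_rel_err; eauto|].
    assert (0 <= alpha n m eps * c) by (unfold alpha; apply Rmult_le_pos; lra).
    pose proof (exp_ineq1_le (alpha n m eps * c)).
    eapply Rle_trans; [apply Rmult_le_compat_l, HAxk; auto; lra|].
    unfold alpha; apply exp_step_err_le; lra. }
  assert (Hp : forall j, (j < m)%nat ->
            Rabs (pj n m eps A x j - pj n m eps A xk j) <= c / 11 * pj n m eps A xk j).
  { intros j Hj. eapply Rle_trans; [apply pj_rel_err; [lra | now apply HAx]|].
    apply Rmult_le_compat_r; [left; apply exp_pos | apply exp_c13_le; lra]. }
  apply (grad_close_band g _ c); [| lra | exact Hcg |].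
  - unfold g, grad. enough (0 <= fsum m (fun j => A j i * pj n m eps A xk j)) by lra.
    apply fsum_nonneg. intros j Hj. apply Rmult_le_pos; [auto | apply Rlt_le, exp_pos].
  - replace (g + 1) with (fsum m (fun j => A j i * pj n m eps A xk j))
      by (unfold g, grad; ring).
    unfold g, grad.
    replace (-1 + fsum m (fun j => A j i * pj n m eps A x j)
             - (-1 + fsum m (fun j => A j i * pj n m eps A xk j)))
      with (fsum m (fun j => A j i * pj n m eps A x j)
            - fsum m (fun j => A j i * pj n m eps A xk j)) by ring.
    apply fsum_rel_err; auto.
Qed.
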